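(* Let $(\mathcal Z,\mathcal W,\phi)$ be a state-flux triple, $\mathcal L$ an L-function on $\mathcal Z$ and $\mathcal V$ a quasipotential corresponding to $\mathcal L$. Then for all $\rho\in\mathrm{Dom}(F^{\mathrm{asym}})$ and $j\in T_\rho\mathcal W$, $$\mathcal L(\rho,j)=\Phi(\rho,j)+\Phi^*(\rho,F^{\mathrm{asym}}(\rho))-\langle F^{\mathrm{asym}}(\rho),j\rangle+\Phi^*_{F^{\mathrm{asym}}(\rho)}(\rho,F^{\mathrm{sym}}(\rho))-\langle F^{\mathrm{sym}}(\rho),j\rangle,$$ and for all $\rho\in\mathrm{Dom}_{\mathrm{symdiss}}(F^{\mathrm{asym}})$ and $j\in T_\rho\mathcal W$, $$\mathcal L(\rho,j)=\Phi(\rho,j)+\Phi^*(\rho,F^{\mathrm{sym}}(\rho))-\langle F^{\mathrm{sym}}(\rho),j\rangle+\Phi^*_{F^{\mathrm{sym}}(\rho)}(\rho,F^{\mathrm{asym}}(\rho))-\langle F^{\mathrm{asym}}(\rho),j\rangle.$$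
   Context: A state-flux triple $(\mathcal Z,\mathcal W,\phi)$ consists of differentiable Banach manifolds $\mathcal Z$, $\mathcal W$ and a surjective differentiable map $\phi:\mathcal W\to\mathcal Z$ such that: $T_w\mathcal W$ depends on $w$ only through $\rho=\phi[w]$ (written $T_\rho\mathcal W$); the differential of $\phi$ is a bounded linear map depending only on $\rho$, written $d\phi_\rho:T_\rho\mathcal W\to T_\rho\mathcal Z$; $T_\rho\mathcal W$, $T_\rho\mathcal Z$ have Banach preduals $T^*_\rho\mathcal W$, $T^*_\rho\mathcal Z$ with pairings $\langle\cdot,\cdot\rangle$; $d\phi_\rho^{\mathsf T}$ is the adjoint. An L-function on $\mathcal Z$ is $\mathcal L:\{(\rho,j):\rho\in\mathcal Z,j\in T_\rho\mathcal W\}\to\mathbb R\cup\{\infty\}$ such that for each $\rho$, $\inf\mathcal L(\rho,\cdot)=0$, there is a unique $j^0(\rho)$ with $\mathcal L(\rho,j^0(\rho))=0$, and $\mathcal L(\rho,\cdot)$ is convex and lower semicontinuous; $\mathcal H(\rho,\zeta)=\sup_j\{\langle\zeta,j\rangle-\mathcal L(\rho,j)\}$. A quasipotential is $\mathcal V:\mathcal Z\to\mathbb R\cup\{\infty\}$ with $\inf\mathcal V=0$ and $\mathcal H(\rho,d\phi_\rho^{\mathsf T}d\mathcal V(\rho))=0$ wherever the Gateaux derivative $d\mathcal V(\rho)$ exists. $\mathrm{Dom}(F)$: set of $\rho$ where $j\mapsto\mathcal L(\rho,j)$ is Gateaux differentiable at $0$, $F(\rho):=-d\mathcal L(\rho,0)$;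 $\Phi^*(\rho,\zeta):=\mathcal H(\rho,\zeta-F(\rho))-\mathcal H(\rho,-F(\rho))$, $\Phi(\rho,j):=\sup_\zeta\{\langle\zeta,j\rangle-\Phi^*(\rho,\zeta)\}$. $\mathrm{Dom}_{\mathrm{symdiss}}(F):=\{\rho\in\mathrm{Dom}(F):\mathcal H(\rho,\zeta-F(\rho))=\mathcal H(\rho,-\zeta-F(\rho))\ \forall\zeta\}$. $\mathrm{Dom}(F^{\mathrm{sym}})$: set where $\mathcal V$ is Gateaux differentiable, $F^{\mathrm{sym}}(\rho):=-\frac12d\phi_\rho^{\mathsf T}d\mathcal V(\rho)$; $\mathrm{Dom}(F^{\mathrm{asym}}):=\mathrm{Dom}(F)\cap\mathrm{Dom}(F^{\mathrm{sym}})$, $F^{\mathrm{asym}}:=F-F^{\mathrm{sym}}$; $\mathrm{Dom}_{\mathrm{symdiss}}(F^{\mathrm{asym}}):=\mathrm{Dom}(F^{\mathrm{asym}})\cap\mathrm{Dom}_{\mathrm{symdiss}}(F)$. Modified dissipation potential: $\Phi^*_{\zeta^2}(\rho,\zeta^1):=\frac12[\Phi^*(\rho,\zeta^1+\zeta^2)+\Phi^*(\rho,-\zeta^1+\zeta^2)]-\Phi^*(\rho,\zeta^2)$.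
   Formalization: Lower semicontinuity of $\mathcal L(\rho,\cdot)$ in the definition of an L-function is taken with respect to the weak-* topology on $T_\rho\mathcal W$ induced by the predual $T^*_\rho\mathcal W$, rather than the norm topology. The statement above fails without it. *)

From HB Require Import structures.
From mathcomp Require Import all_boot all_order all_algebra.
From mathcomp Require Import all_classical all_reals all_analysis.
Set Implicit Arguments. Unset Strict Implicit. Unset Printing Implicit Defensive.
Import Order.TTheory GRing.Theory Num.Theory.
Import numFieldNormedType.Exports.
Local Open Scope classical_set_scope.
Local Open Scope ring_scope.

(* [is_predual p] : Xs is a Banach predual of X via the pairing
   p : Xs -> X -> R, i.e. x |-> p(.,x) is a linear isometric
   isomorphism of X onto the (norm) dual of Xs.                        *)
Definition is_predual (R : realType) (Xs X : completeNormedModType R)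
  (p : Xs -> X -> R) : Prop :=
  [/\ (forall (a : R) (z1 z2 : Xs) (x : X), p (a *: z1 + z2) x = a * p z1 x + p z2 x),
      (forall (a : R) (z : Xs) (x1 x2 : X), p z (a *: x1 + x2) = a * p z x1 + p z x2),
      (* isometry : ||x|| = sup_{||z||<=1} |p z x| *)
      (forall (z : Xs) (x : X), `|p z x| <= `|z| * `|x|),
      (forall (x : X) (e : R), 0 < e ->
          exists z : Xs, `|z| <= 1 /\ `|x| - e < `|p z x|) &
      (forall f : Xs -> R,
          (forall (a : R) (z1 z2 : Xs), f (a *: z1 + z2) = a * f z1 + f z2) ->
          continuous f ->
          exists x : X, forall z, f z = p z x)].

(* The manifolds Z and W enter only through their
   tangent spaces T_rho Z, T_rho W (which depend on the base point of Z
   only), their preduals, the differential d phi_rho and its adjoint,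
   and the notion of Gateaux derivative of functions Z -> \bar R, whose
   values lie in the predual T*_rho Z (field [gderivZ]).               *)
Record state_flux_triple (R : realType) := StateFluxTriple {
  sZ : Type;
  sW : Type;
  sphi : sW -> sZ;
  sphi_surj : forall z : sZ, exists w : sW, sphi w = z;
  TZ : sZ -> completeNormedModType R;
  TW : sZ -> completeNormedModType R;
  TZs : sZ -> completeNormedModType R;
  TWs : sZ -> completeNormedModType R;
  pZ : forall rho, TZs rho -> TZ rho -> R;
  pW : forall rho, TWs rho -> TW rho -> R;
  pZ_predual : forall rho, @is_predual R (TZs rho) (TZ rho) (@pZ rho);
  pW_predual : forall rho, @is_predual R (TWs rho) (TW rho) (@pW rho);
  dphi : forall rho, TW rho -> TZ rho;
  dphi_linear : forall rho (a : R) (j1 j2 : TW rho),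
      @dphi rho (a *: j1 + j2) = a *: @dphi rho j1 + @dphi rho j2;
  dphi_bounded : forall rho, continuous (@dphi rho);
  dphiT : forall rho, TZs rho -> TWs rho;
  dphiT_adjoint : forall rho (z : TZs rho) (j : TW rho),
      @pW rho (@dphiT rho z) j = @pZ rho z (@dphi rho j);
  (* Gateaux derivative on the manifold Z: [gderivZ V rho z] means that
     V is Gateaux differentiable at rho with dV(rho) = z in T*_rho Z. *)
  gderivZ : (sZ -> \bar R) -> forall rho, TZs rho -> Prop;
  gderivZ_unique : forall V rho (z1 z2 : TZs rho),
      @gderivZ V rho z1 -> @gderivZ V rho z2 -> z1 = z2
}.

Arguments sZ {R} s.
Arguments sW {R} s.
Arguments sphi {R} s.
Arguments TZ {R} s rho.
Arguments TW {R} s rho.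
Arguments TZs {R} s rho.
Arguments TWs {R} s rho.
Arguments pW {R} s {rho}.
Arguments pZ {R} s {rho}.
Arguments dphi {R} s {rho}.
Arguments dphiT {R} s {rho}.
Arguments gderivZ {R} s V rho.

Section Lfun.
Variables (R : realType) (S : state_flux_triple R).
Local Open Scope ereal_scope.

Definition convexW rho (f : TW S rho -> \bar R) : Prop :=
  forall (t : R) (j1 j2 : TW S rho), (0 < t < 1)%R ->
    f (t *: j1 + (1 - t) *: j2)%R <= t%:E * f j1 + (1 - t)%:E * f j2.

(* lower semicontinuity w.r.t. the weak-* topology sigma(T_rho W, T*_rho W) *)
Definition lscW rho (f : TW S rho -> \bar R) : Prop :=
  forall (j : TW S rho) (c : R), c%:E < f j ->
    exists (s : seq (TWs S rho)) (d : R), (0 < d)%R /\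
      forall j' : TW S rho, (forall z, z \in s -> (`|pW S z (j' - j)%R| < d)%R) ->
        c%:E < f j'.

Definition is_Lfunction (L : forall rho, TW S rho -> \bar R) : Prop :=
  forall rho,
  [/\ ereal_inf (range (L rho)) = 0,
      exists! j : TW S rho, L rho j = 0,
      convexW (L rho) & lscW (L rho)].

Definition Hf (L : forall rho, TW S rho -> \bar R) rho (z : TWs S rho) : \bar R :=
  ereal_sup (range (fun j : TW S rho => (pW S z j)%:E - L rho j)).

Definition is_quasipotential (L : forall rho, TW S rho -> \bar R)
  (V : sZ S -> \bar R) : Prop :=
  ereal_inf (range V) = 0 /\
  forall rho (z : TZs S rho), gderivZ S V rho z -> Hf L (dphiT S z) = 0.

(* j |-> L(rho, j) is Gateaux differentiable at 0 with derivative
   z in T*_rho W, i.e. rho \in Dom(F) and F(rho) = - z. *)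
Definition LGateaux0 (L : forall rho, TW S rho -> \bar R) rho (z : TWs S rho) : Prop :=
  forall v : TW S rho,
    (fun h : R => (L rho (h *: v)%R - L rho 0%R) * (h^-1)%:E) @ 0%R^'
      --> (pW S z v)%:E.

Definition PhiS (L : forall rho, TW S rho -> \bar R) rho (F z : TWs S rho) : \bar R :=
  Hf L (z - F)%R - Hf L (- F)%R.

Definition Phi (L : forall rho, TW S rho -> \bar R) rho (F : TWs S rho)
  (j : TW S rho) : \bar R :=
  ereal_sup (range (fun z : TWs S rho => (pW S z j)%:E - PhiS L F z)).

Definition PhiSmod (L : forall rho, TW S rho -> \bar R) rho (F z2 z1 : TWs S rho)
  : \bar R :=
  (2^-1)%:E * (PhiS L F (z1 + z2)%R + PhiS L F (- z1 + z2)%R) - PhiS L F z2.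

Definition symdiss (L : forall rho, TW S rho -> \bar R) rho (F : TWs S rho) : Prop :=
  forall z : TWs S rho, Hf L (z - F)%R = Hf L (- z - F)%R.

End Lfun.

From HB Require Import structures.
From mathcomp Require Import all_boot all_order all_algebra.
From mathcomp Require Import all_classical all_reals all_analysis.
From mathcomp Require Import ring lra.
Import Order.TTheory GRing.Theory Num.Theory.
Import numFieldNormedType.Exports.
Set Implicit Arguments.
Unset Strict Implicit.
Unset Printing Implicit Defensive.
Local Open Scope classical_set_scope.
Local Open Scope ring_scope.

(* At rho put F := - dL0. Convexity of L(rho, .) makes its Gateaux derivative
   dL0 at 0 a subgradient, so H(rho, -F) = - L(rho, 0) is finite. Being convex
   and weak-* lower semicontinuous, L(rho, .) is its own biconjugate, whence
     Phi(rho, j) = L(rho, j) + <F, j> + H(rho, -F),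
     Phi^*(rho, z) = H(rho, z - F) - H(rho, -F).
   For any splitting F = Z1 + Z2 with H(rho, -2 Z2) = 0 the right-hand side of
   the corollary then collapses to L(rho, j): H(rho, 0) = 0, and the remaining
   value H(rho, -Z2) <= H(rho, -2 Z2) / 2 is finite and cancels. The quasipotential
   gives H(rho, -2 F^sym) = H(rho, dphi^T dV) = 0, and symmetric dissipation
   turns H(rho, -2 F^asym) into H(rho, -2 F^sym).
   Biconjugation reduces to finite dimensions: lower semicontinuity at j only
   involves finitely many functionals z_i, and a subgradient a at 0 of the
   convex function y |-> inf_x L(rho, x) + M sum_i |y_i - <z_i, x - j>| on R^n,
   obtained by one-dimensional Hahn-Banach extensions, yields the functional
   sum_i a_i z_i. *)

Section AffineMinorantExtension.
Variables (R : realType) (V : lmodType R) (p : V -> R).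
Hypothesis p_convex : forall (t : R) (x y : V), 0 < t < 1 ->
  p (t *: x + (1 - t) *: y) <= t * p x + (1 - t) * p y.
Variables (M : set V) (l : V -> R).
Hypotheses (M_convex : forall (t : R) (x y : V), 0 < t < 1 -> M x -> M y ->
               M (t *: x + (1 - t) *: y))
           (l_affine : forall (t : R) (x y : V),
               l (t *: x + (1 - t) *: y) = t * l x + (1 - t) * l y)
           (l_le_p : forall m, M m -> l m <= p m).

Lemma affine_minorant_slope_le (e m1 m2 : V) (s t : R) : M m1 -> M m2 ->
  0 < s -> 0 < t -> (l m1 - p (m1 - s *: e)) / s <= (p (m2 + t *: e) - l m2) / t.
Proof.
move=> Mm1 Mm2 s0 t0.
pose k := t / (s + t).
have st0 : 0 < s + t by rewrite addr_gt0.
have k01 : 0 < k < 1 by rewrite divr_gt0 //= ltr_pdivrMr // mul1r ltrDr.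
have ks : k * s = (1 - k) * t by rewrite /k; field; rewrite gt_eqF.
have mix : k *: (m1 - s *: e) + (1 - k) *: (m2 + t *: e) =
           k *: m1 + (1 - k) *: m2.
  by rewrite !scalerDr scalerN !scalerA ks addrACA addNr addr0.
have := @p_convex k (m1 - s *: e) (m2 + t *: e) k01.
have := @l_le_p _ (@M_convex k m1 m2 k01 Mm1 Mm2).
rewrite mix l_affine => lp pc.
have : k * (l m1 - p (m1 - s *: e)) <= (1 - k) * (p (m2 + t *: e) - l m2) by lra.
have -> : (l m1 - p (m1 - s *: e)) / s =
          k * (l m1 - p (m1 - s *: e)) * ((s + t) / (s * t)).
  by rewrite /k; field; rewrite !gt_eqF.
have -> : (p (m2 + t *: e) - l m2) / t =
          (1 - k) * (p (m2 + t *: e) - l m2) * ((s + t) / (s * t)).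
  by rewrite /k; field; rewrite !gt_eqF.
by apply: ler_wpM2r; rewrite divr_ge0 ?mulr_ge0 // ltW.
Qed.

Lemma affine_minorant_extend (e m0 : V) : M m0 ->
  exists g : R, forall (m : V) (t : R), M m -> l m + t * g <= p (m + t *: e).
Proof.
move=> Mm0.
pose slopes := [set (l m - p (m - s *: e)) / s | m in M & s in [set s | 0 < s]].
have slopes0 : slopes !=set0.
  by exists ((l m0 - p (m0 - 1 *: e)) / 1); exists m0 => //; exists 1 => //=; exact: ltr01.
have slopes_ub : has_ubound slopes.
  exists ((p (m0 + 1 *: e) - l m0) / 1) => _ [m Mm [s s0 <-]].
  exact: affine_minorant_slope_le.
exists (sup slopes) => m t Mm.
have [t0|t0|->] := ltgtP t 0; last by rewrite mul0r addr0 scale0r addr0; apply: l_le_p.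
- have slope_m : slopes ((l m - p (m - (- t) *: e)) / (- t)).
    by exists m => //; exists (- t) => //=; rewrite oppr_gt0.
  have := ub_le_sup slopes_ub slope_m.
  rewrite scaleNr opprK ler_pdivrMr ?oppr_gt0 // => h; nra.
- have : sup slopes <= (p (m + t *: e) - l m) / t.
    apply: ge_sup => // _ [m' Mm' [s s0 <-]]; exact: affine_minorant_slope_le.
  rewrite ler_pdivlMr // => h; nra.
Qed.

End AffineMinorantExtension.

Lemma fct_combE (R : realType) (T : Type) (s t : R) (f g : T -> R) (x : T) :
  (s *: f + t *: g) x = s * f x + t * g x.
Proof. by []. Qed.

Section CoordinateSubgradient.
Variables (R : realType) (n : nat) (p : ('I_n -> R) -> R).
Hypothesis p_convex : forall (t : R) (x y : 'I_n -> R), 0 < t < 1 ->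
  p (t *: x + (1 - t) *: y) <= t * p x + (1 - t) * p y.

Lemma convex_subgradient0_coord k : (k <= n)%N -> exists a : 'I_n -> R,
  forall y, (forall i : 'I_n, (k <= i)%N -> y i = 0) -> p 0 + \sum_i a i * y i <= p y.
Proof.
elim: k => [_|k IH kn].
  exists 0 => y y0; have -> : y = 0 by apply/funext => i; rewrite y0.
  by rewrite big1 ?addr0 // => i _; rewrite mul0r.
have [a Ha] := IH (ltnW kn).
pose kk : 'I_n := Ordinal kn.
pose e : 'I_n -> R := fun i => (i == kk)%:R.
pose M := [set y : 'I_n -> R | forall i : 'I_n, (k <= i)%N -> y i = 0].
have M_convex t x y : 0 < t < 1 -> M x -> M y -> M (t *: x + (1 - t) *: y).
  by move=> _ Mx My i ki; rewrite fct_combE (Mx i ki) (My i ki) !mulr0 addr0.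
have l_affine t (x y : 'I_n -> R) :
    p 0 + \sum_i a i * (t *: x + (1 - t) *: y) i =
    t * (p 0 + \sum_i a i * x i) + (1 - t) * (p 0 + \sum_i a i * y i).
  have -> : \sum_i a i * (t *: x + (1 - t) *: y) i =
            t * \sum_i a i * x i + (1 - t) * \sum_i a i * y i.
    by rewrite !mulr_sumr -big_split; apply: eq_bigr => i _; rewrite fct_combE /=; ring.
  ring.
have M0 : M 0 by [].
have [g Hg] := affine_minorant_extend p_convex M_convex l_affine Ha e M0.
exists (fun i => if i == kk then g else a i) => y Hy.
pose m : 'I_n -> R := fun i => if i == kk then 0 else y i.
have Mm : M m.
  move=> i ki; rewrite /m; have [// | ik] := eqVneq i kk.
  apply: Hy; rewrite ltn_neqAle ki andbT.
  by apply: contraNneq ik => ki'; apply/eqP/val_inj.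
have ym : m + y kk *: e = y.
  apply/funext => i; have -> : (m + y kk *: e) i = m i + y kk * e i by [].
  by rewrite /m /e; have [-> | ik] := eqVneq i kk; rewrite ?mulr1 ?add0r ?mulr0 ?addr0.
suff -> : \sum_i (if i == kk then g else a i) * y i = \sum_i a i * m i + y kk * g.
  by rewrite addrA -[X in _ <= p X]ym; exact: Hg.
rewrite (bigD1 kk) //= eqxx [in RHS](bigD1 kk) //= /m eqxx mulr0 add0r addrC mulrC.
by congr (_ + _); apply: eq_bigr => i /negbTE ->.
Qed.

Lemma convex_subgradient0 : exists a : 'I_n -> R,
  forall y, p 0 + \sum_i a i * y i <= p y.
Proof.
have [a Ha] := convex_subgradient0_coord (leqnn n); exists a => y; apply: Ha => i ni.
by move: (ltn_ord i); rewrite ltnNge ni.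
Qed.

End CoordinateSubgradient.

Section Pairing.
Variables (R : realType) (S : state_flux_triple R) (rho : sZ S).
Implicit Types (z : TWs S rho) (x : TW S rho).

Lemma pW_linearl a z1 z2 x : pW S (a *: z1 + z2) x = a * pW S z1 x + pW S z2 x.
Proof. by case: (@pW_predual _ S rho). Qed.

Lemma pW_linearr a z x1 x2 : pW S z (a *: x1 + x2) = a * pW S z x1 + pW S z x2.
Proof. by case: (@pW_predual _ S rho). Qed.

Lemma pW0l x : pW S 0 x = 0.
Proof.
by have := pW_linearl 1 0 0 x; rewrite scaler0 addr0 mul1r -{1}[pW S 0 x]addr0 => /addrI.
Qed.

Lemma pW0r z : pW S z 0 = 0.
Proof.
by have := pW_linearr 1 z 0 0; rewrite scaler0 addr0 mul1r -{1}[pW S z 0]addr0 => /addrI.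
Qed.

Lemma pWDl z1 z2 x : pW S (z1 + z2) x = pW S z1 x + pW S z2 x.
Proof. by have := pW_linearl 1 z1 z2 x; rewrite scale1r mul1r. Qed.

Lemma pWZl a z x : pW S (a *: z) x = a * pW S z x.
Proof. by rewrite -[a *: z]addr0 pW_linearl pW0l addr0. Qed.

Lemma pWBl z1 z2 x : pW S (z1 - z2) x = pW S z1 x - pW S z2 x.
Proof. by rewrite addrC -scaleN1r pW_linearl mulN1r addrC. Qed.

Lemma pWDr z x1 x2 : pW S z (x1 + x2) = pW S z x1 + pW S z x2.
Proof. by have := pW_linearr 1 z x1 x2; rewrite scale1r mul1r. Qed.

Lemma pWZr a z x : pW S z (a *: x) = a * pW S z x.
Proof. by rewrite -[a *: x]addr0 pW_linearr pW0r addr0. Qed.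

Lemma pWBr z x1 x2 : pW S z (x1 - x2) = pW S z x1 - pW S z x2.
Proof. by rewrite addrC -scaleN1r pW_linearr mulN1r addrC. Qed.

Lemma pW_suml n (F : 'I_n -> TWs S rho) x : pW S (\sum_i F i) x = \sum_i pW S (F i) x.
Proof. by apply: (big_morph (pW S ^~ x)) => [z1 z2|]; rewrite ?pWDl ?pW0l. Qed.

End Pairing.

Section AffineMinorant.
Variables (R : realType) (S : state_flux_triple R) (rho : sZ S).
Local Notation X := (TW S rho).
Local Notation Xs := (TWs S rho).
Variable f : X -> \bar R.
Hypotheses (f_ge0 : forall x, (0 <= f x)%E) (f_convex : convexW f).
Variables (x0 j : X) (c d : R) (zs : seq Xs).
Hypotheses (f_x0 : (f x0 < +oo)%E) (d_gt0 : 0 < d)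
  (f_gt_c : forall x, (forall z, z \in zs -> `|pW S z (x - j)| < d) -> (c%:E < f x)%E).

Let n := size zs.
Let T (x : X) : 'I_n -> R := fun i => pW S (nth 0 zs i) (x - j).
(* The weight makes points outside the weak-* neighbourhood of j pay at
   least |c|. *)
Let M := `|c| / d.
Let penalized (y : 'I_n -> R) (x : X) := (f x + (M * \sum_i `|y i - T x i|)%:E)%E.
Let g (y : 'I_n -> R) := fine (ereal_inf (range (penalized y))).

Let M_ge0 : 0 <= M. Proof. by rewrite divr_ge0 // ltW. Qed.

Let penalty_ge0 y x : 0 <= M * \sum_i `|y i - T x i|.
Proof. by rewrite mulr_ge0 // sumr_ge0. Qed.

Let gE y : ereal_inf (range (penalized y)) = (g y)%:E.
Proof.
rewrite fineK // ge0_fin_numE; last first.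
  by apply: le_ereal_inf_tmp => _ [x _ <-]; rewrite adde_ge0 // lee_fin.
apply: (@le_lt_trans _ _ (penalized y x0)); first by apply: ereal_inf_lbound; exists x0.
by rewrite lte_add_pinfty ?ltry.
Qed.

Let g_le y x : ((g y)%:E <= penalized y x)%E.
Proof. by rewrite -gE; apply: ereal_inf_lbound; exists x. Qed.

Let T_affine (t : R) (x1 x2 : X) i :
  T (t *: x1 + (1 - t) *: x2) i = t * T x1 i + (1 - t) * T x2 i.
Proof. by rewrite /T !pWBr !pWDr !pWZr; ring. Qed.

Let penalized_convex (t : R) (y1 y2 : 'I_n -> R) (x1 x2 : X) : 0 < t < 1 ->
  (penalized (t *: y1 + (1 - t) *: y2)%R (t *: x1 + (1 - t) *: x2)%R <=
   t%:E * penalized y1 x1 + (1 - t)%:E * penalized y2 x2)%E.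
Proof.
move=> /andP[t0 t1].
have t0' : 0 <= t by exact: ltW.
have t1' : 0 <= 1 - t by rewrite subr_ge0 ltW.
rewrite /penalized !ge0_muleDr // ?lee_fin // -!EFinM addeACA leeD //.
  by apply: f_convex; rewrite t0 t1.
rewrite -EFinD lee_fin mulrCA [X in _ <= _ + X]mulrCA -mulrDr ler_wpM2l //.
rewrite !mulr_sumr -big_split /=; apply: ler_sum => i _.
rewrite fct_combE T_affine.
have -> : t * y1 i + (1 - t) * y2 i - (t * T x1 i + (1 - t) * T x2 i) =
          t * (y1 i - T x1 i) + (1 - t) * (y2 i - T x2 i) by ring.
by apply: le_trans (ler_normD _ _) _; rewrite !normrM (ger0_norm t0') (ger0_norm t1').
Qed.

Let g_convex (t : R) (y1 y2 : 'I_n -> R) : 0 < t < 1 ->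
  g (t *: y1 + (1 - t) *: y2) <= t * g y1 + (1 - t) * g y2.
Proof.
move=> t01; have /andP[t0 t1] := t01.
apply/ler_addgt0Pr => e e0.
have [_ [x1 _ <-] Hx1] : exists2 v, range (penalized y1) v & (v < (g y1 + e)%:E)%E.
  by apply: ereal_inf_lt; rewrite gE lte_fin ltrDl.
have [_ [x2 _ <-] Hx2] : exists2 v, range (penalized y2) v & (v < (g y2 + e)%:E)%E.
  by apply: ereal_inf_lt; rewrite gE lte_fin ltrDl.
rewrite -lee_fin; apply: le_trans (g_le _ (t *: x1 + (1 - t) *: x2)) _.
apply: le_trans (penalized_convex _ _ _ _ t01) _.
have -> : t * g y1 + (1 - t) * g y2 + e = t * (g y1 + e) + (1 - t) * (g y2 + e) by ring.
rewrite [leRHS]EFinD !EFinM; apply: leeD; apply: lee_wpmul2l; rewrite ?lee_fin ?ltW //.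
by rewrite subr_gt0.
Qed.

Let c_le_g0 : c <= g 0.
Proof.
rewrite -lee_fin -gE; apply: le_ereal_inf_tmp => _ [x _ <-]; rewrite /penalized.
have [near|far] := pselect (forall i : 'I_n, `|T x i| < d).
  have cf : (c%:E < f x)%E.
    by apply: f_gt_c => z /(nthP 0) [i ilt <-]; exact: (near (Ordinal ilt)).
  by apply: le_trans (ltW cf) (leeDl _ _); rewrite lee_fin.
have [i far_i] := (existsNP _).2 far.
rewrite -[c%:E]add0e leeD // lee_fin (le_trans (ler_norm c)) //.
rewrite -[`|c|](divfK (lt0r_neq0 d_gt0)) -/M ler_wpM2l //.
apply: le_trans (_ : `|T x i| <= _); first by rewrite leNgt; apply/negP.
by rewrite (bigD1 i) //= sub0r normrN lerDl sumr_ge0.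
Qed.

Let g_T_le x : ((g (T x))%:E <= f x)%E.
Proof.
apply: le_trans (g_le _ x) _; rewrite /penalized big1 ?mulr0 ?adde0 // => i _.
by rewrite subrr normr0.
Qed.

Lemma affine_minorant_of_nbhd : exists xi : Xs,
  forall x, ((pW S xi x)%:E - f x <= (pW S xi j - c)%:E)%E.
Proof.
have [a Ha] := convex_subgradient0 g_convex.
exists (\sum_i a i *: nth 0 zs i) => x.
have xi_T : pW S (\sum_i a i *: nth 0 zs i) x - pW S (\sum_i a i *: nth 0 zs i) j =
            \sum_i a i * T x i.
  by rewrite -pWBr pW_suml; apply: eq_bigr => i _; rewrite pWZl.
have : c + \sum_i a i * T x i <= g (T x) by apply: le_trans (Ha (T x)); rewrite lerD2r.
move: (g_T_le x) (f_ge0 x); case: (f x) => [r| |] //= gr _ H; last by rewrite leNye.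
rewrite -EFinB lee_fin; rewrite lee_fin in gr; lra.
Qed.

End AffineMinorant.

Lemma lee_of_fin_lt (R : realType) (x y : \bar R) :
  (forall c : R, (c%:E < x)%E -> (c%:E <= y)%E) -> (x <= y)%E.
Proof.
case: x => [r| |] H; last exact: leNye.
- by apply/lee_subgt0Pr => e e0; apply: H; rewrite lte_fin ltrBlDr ltrDl.
- case: y H => [s| |] H //.
    by have := H (s + 1) (ltry _); rewrite lee_fin leNgt ltrDl ltr01.
  by have := H 0 (ltry _).
Qed.

Section LFunction.
Unset Implicit Arguments.
Variables (R : realType) (S : state_flux_triple R) (L : forall rho, TW S rho -> \bar R).
Set Implicit Arguments.
Hypothesis L_Lfun : is_Lfunction L.
Variable rho : sZ S.
Local Notation X := (TW S rho).
Local Notation Xs := (TWs S rho).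
Local Open Scope ereal_scope.

Lemma L_ge0 (j : X) : 0 <= L rho j.
Proof.
by have [<- _ _ _] := L_Lfun rho; apply: ereal_inf_lbound; exists j.
Qed.

Lemma L_zero : exists j0 : X, L rho j0 = 0.
Proof. by have [_ [j0 [L_j0 _]] _ _] := L_Lfun rho; exists j0. Qed.

Lemma Hf_ge (z : Xs) (j : X) : (pW S z j)%:E - L rho j <= Hf L z.
Proof. by apply: ereal_sup_ubound; exists j. Qed.

Lemma Hf_gtNy (z : Xs) : -oo < Hf L z.
Proof.
have [j0 L_j0] := L_zero.
by apply: lt_le_trans (Hf_ge z j0); rewrite L_j0 sube0 ltNyr.
Qed.

Lemma Hf0 : Hf L (0%R : Xs) = 0.
Proof.
apply/eqP; rewrite eq_le; apply/andP; split.
  by apply: ge_ereal_sup => _ [j _ <-]; rewrite pW0l sub0e oppe_le0 L_ge0.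
have [j0 L_j0] := L_zero.
by apply: le_trans (Hf_ge 0%R j0); rewrite pW0l L_j0 sube0.
Qed.

Lemma Hf_scale (t : R) (z : Xs) : (0 <= t <= 1)%R -> Hf L (t *: z) <= t%:E * Hf L z.
Proof.
move=> /andP[t0 t1]; apply: ge_ereal_sup => _ [j _ <-].
apply: le_trans (lee_wpmul2l _ (Hf_ge z j)); last by rewrite lee_fin.
rewrite pWZl; move: (L_ge0 j); case: (L rho j) => [r| |] //= r0; last first.
  by rewrite addeNy leNye.
rewrite -!EFinD -EFinM lee_fin mulrDr lerD2l mulrN lerN2.
by rewrite -[leRHS]mul1r ler_wpM2r // -lee_fin.
Qed.

Lemma biconjugate_witness (j : X) (c : R) :
  c%:E < L rho j -> exists xi : Xs, Hf L xi <= (pW S xi j - c)%:E.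
Proof.
move=> c_lt_L; have [_ _ L_convex L_lsc] := L_Lfun rho.
have [zs [d [d0 near_j]]] := L_lsc j c c_lt_L.
have [j0 L_j0] := L_zero.
have L_j0_lt : L rho j0 < +oo by rewrite L_j0 ltry.
have [xi Hxi] := affine_minorant_of_nbhd L_ge0 L_convex L_j0_lt d0 near_j.
by exists xi; apply: ge_ereal_sup => _ [x _ <-].
Qed.

Lemma Phi_Lfun (F : Xs) (j : X) : Hf L (- F)%R \is a fin_num ->
  Phi L F j = L rho j + (pW S F j)%:E + Hf L (- F)%R.
Proof.
move=> Ffin; have PhiSE z : PhiS L F z = Hf L (z - F)%R - (fine (Hf L (- F)%R))%:E.
  by rewrite /PhiS fineK.
rewrite -(fineK Ffin) -addeA -EFinD; set k := (pW S F j + _)%R.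
apply/eqP; rewrite eq_le; apply/andP; split.
- apply: ge_ereal_sup => _ [z _ <-]; rewrite PhiSE.
  have := Hf_ge (z - F)%R j; rewrite pWBl /k.
  move: (L_ge0 j) (Hf_gtNy (z - F)%R).
  case: (L rho j) => [r| |] //; case: (Hf L (z - F)%R) => [h| |] //= _ _.
  + by rewrite -!EFinB -EFinD !lee_fin => ?; lra.
  + by rewrite addeNy leNye.
  + by rewrite leey.
- rewrite -leeBrDr //; apply: lee_of_fin_lt => c /biconjugate_witness [xi Hxi].
  rewrite leeBrDr //; apply: le_ereal_sup_tmp.
  exists ((pW S (xi + F)%R j)%:E - PhiS L F (xi + F)%R); first by exists (xi + F)%R.
  rewrite PhiSE addrK pWDl /k; move: Hxi (Hf_gtNy xi).
  by case: (Hf L xi) => [h| |] //=; rewrite -!EFinB -!EFinD !lee_fin => ? _; lra.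
Qed.

(* In \bar R, +oo - +oo = -oo: were L rho 0 infinite, the difference
   quotient along v = 0 would be -oo. *)
Lemma LGateaux0_fin (dL0 : Xs) : LGateaux0 L dL0 -> L rho 0%R \is a fin_num.
Proof.
move=> dL; rewrite ge0_fin_numE ?L_ge0 // ltNge leye_eq; apply/negP => /eqP L0y.
suff : (pW S dL0 0%R)%:E <= -oo by rewrite leNgt ltNyr.
apply: cvge_to_le (cvg_dnbhs_at_right (dL 0%R)) _.
near=> h; have h0 : (0 < h)%R by near: h; exact: nbhs_right_gt.
by rewrite scaler0 L0y /= mulNyr gtr0_sg ?invr_gt0 // mul1e.
Unshelve. all: by end_near.
Qed.

Lemma LGateaux0_subgradient (dL0 : Xs) (j : X) : LGateaux0 L dL0 ->
  L rho 0%R + (pW S dL0 j)%:E <= L rho j.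
Proof.
move=> dL; have L0fin := LGateaux0_fin dL; have [_ _ L_convex _] := L_Lfun rho.
rewrite addeC -leeBrDr //; apply: cvge_to_le (cvg_dnbhs_at_right (dL j)) _.
near=> h; have h0 : (0 < h)%R by near: h; exact: nbhs_right_gt.
have h1 : (h < 1)%R by near: h; exact: (nbhs_right_lt ltr01).
have := L_convex h j 0%R (introT andP (conj h0 h1)).
rewrite scaler0 addr0 -(fineK L0fin); set A := fine (L rho 0%R).
move: (L_ge0 j) (L_ge0 (h *: j)%R).
case: (L rho j) => [r| |] // _; last by rewrite addye // leey.
rewrite -!EFinM -EFinD; case: (L rho (h *: j)%R) => [b| |] //= _.
by rewrite -EFinD -EFinM !lee_fin ler_pdivrMr // => ?; lra.
Unshelve. all: by end_near.
Qed.

Lemma Hf_LGateaux0 (dL0 : Xs) : LGateaux0 L dL0 -> Hf L dL0 = - L rho 0%R.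
Proof.
move=> dL; have L0fin := LGateaux0_fin dL.
apply/eqP; rewrite eq_le; apply/andP; split; last first.
  by apply: le_trans (Hf_ge dL0 0%R); rewrite pW0r sub0e.
apply: ge_ereal_sup => _ [j _ <-]; have := LGateaux0_subgradient j dL.
rewrite -(fineK L0fin); case: (L rho j) => [r| |] //=.
- by rewrite -!EFinD !lee_fin => ?; lra.
- by rewrite addeNy leNye.
Qed.

Lemma Lfun_decomposition (F Z1 Z2 : Xs) (j : X) :
  (Z1 + Z2 = F)%R -> Hf L (- F)%R \is a fin_num -> Hf L ((-2) *: Z2)%R = 0 ->
  L rho j = Phi L F j + PhiS L F Z1 - (pW S Z1 j)%:E
            + PhiSmod L F Z1 Z2 - (pW S Z2 j)%:E.
Proof.
move=> <- {F} Ffin H2.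
have Z2fin : Hf L (- Z2)%R \is a fin_num.
  rewrite le0_fin_numE ?Hf_gtNy //.
  have -> : (- Z2 = 2^-1 *: ((-2) *: Z2))%R.
    by rewrite scalerA mulrN mulVf ?pnatr_eq0 // scaleN1r.
  apply: le_trans (Hf_scale _ _) _; first by rewrite invr_ge0 ler0n invf_le1 ?ler1n.
  by rewrite H2 mule0.
rewrite (Phi_Lfun _ Ffin) /PhiSmod /PhiS.
have -> : (Z1 - (Z1 + Z2) = - Z2)%R by rewrite opprD addNKr.
have -> : (Z2 + Z1 - (Z1 + Z2) = 0)%R by rewrite [(Z2 + Z1)%R]addrC subrr.
have -> : (- Z2 + Z1 - (Z1 + Z2) = (-2) *: Z2)%R.
  by rewrite opprD addrA addrK scaleNr scaler_nat mulr2n opprD.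
rewrite Hf0 H2 -(fineK Ffin) -(fineK Z2fin) pWDl.
move: (L_ge0 j); case: (L rho j) => [r| |] //= _.
rewrite !add0e -!EFinD; congr EFin; lra.
Qed.

Lemma Hf_symdiss (F Z : Xs) : symdiss L F ->
  Hf L ((-2) *: (F - Z))%R = Hf L ((-2) *: Z)%R.
Proof.
move=> F_symdiss; have := F_symdiss (Z *+ 2 - F)%R.
have -> : (Z *+ 2 - F - F = (-2) *: (F - Z))%R.
  by rewrite scaleNr scaler_nat mulrnBl opprB -addrA -opprD -mulr2n.
have -> // : (- (Z *+ 2 - F) - F = (-2) *: Z)%R.
by rewrite opprB addrAC subrr add0r scaleNr scaler_nat.
Qed.

End LFunction.

Lemma scaleN2_opp_half (R : realType) (V : lmodType R) (w : V) :
  (-2) *: (- (2^-1 *: w)) = w.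
Proof. by rewrite scalerN scaleNr opprK scalerA mulfV ?pnatr_eq0 // scale1r. Qed.

Local Open Scope ereal_scope.

Theorem corollary2p25 (R : realType) (S : state_flux_triple R)
  (L : forall rho, TW S rho -> \bar R) (V : sZ S -> \bar R) :
  is_Lfunction L -> is_quasipotential L V ->
  (* rho in Dom(F^asym): dL(rho,0) = dL0, dV(rho) = dV *)
  (forall (rho : sZ S) (dL0 : TWs S rho) (dV : TZs S rho),
     LGateaux0 L dL0 -> gderivZ S V rho dV ->
     let F := (- dL0)%R in
     let Fsym := (- ((2^-1 : R) *: dphiT S dV))%R in
     let Fasym := (F - Fsym)%R in
     forall j : TW S rho,
       L rho j = Phi L F j + PhiS L F Fasym - (pW S Fasym j)%:E
                 + PhiSmod L F Fasym Fsym - (pW S Fsym j)%:E)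
  /\
  (* rho in Dom_symdiss(F^asym) *)
  (forall (rho : sZ S) (dL0 : TWs S rho) (dV : TZs S rho),
     LGateaux0 L dL0 -> gderivZ S V rho dV -> symdiss L (- dL0)%R ->
     let F := (- dL0)%R in
     let Fsym := (- ((2^-1 : R) *: dphiT S dV))%R in
     let Fasym := (F - Fsym)%R in
     forall j : TW S rho,
       L rho j = Phi L F j + PhiS L F Fsym - (pW S Fsym j)%:E
                 + PhiSmod L F Fsym Fasym - (pW S Fasym j)%:E).
Proof.
move=> L_Lfun [_ V_qp].
have Hf_F rho (dL0 : TWs S rho) : LGateaux0 L dL0 -> Hf L (- - dL0)%R \is a fin_num.
  by move=> dL; rewrite opprK (Hf_LGateaux0 L_Lfun dL) fin_numN (LGateaux0_fin L_Lfun dL).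
have Hf_Fsym rho dV : gderivZ S V rho dV ->
    Hf L ((-2) *: (- ((2^-1 : R) *: dphiT S dV)))%R = 0.
  by move=> dVrho; rewrite scaleN2_opp_half (V_qp _ _ dVrho).
split=> rho dL0 dV dL dVrho.
- move=> F Fsym Fasym j; apply: (Lfun_decomposition L_Lfun).
  + by rewrite /Fasym subrK.
  + exact: Hf_F.
  + exact: Hf_Fsym.
- move=> F_symdiss F Fsym Fasym j; apply: (Lfun_decomposition L_Lfun).
  + by rewrite /Fasym addrC subrK.
  + exact: Hf_F.
  + by rewrite (Hf_symdiss _ F_symdiss) Hf_Fsym.
Qed.
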